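(* For every $(x,a)\in H\times\mathcal{A}$, $Q^{\delta,\mathscr{P}}_{\pi}(x,a)$ equals the optimal value of the convex program \[ \inf_{\lambda\ge0,\ h:\mathcal{X}\to\mathbb{R}}\ \Big(\lambda\delta+\sum_{y\in\mathcal{X}}h(y)P_{x,a}(y)\Big) \] subject to \[ \max_{l\in\mathcal{X}}\Big(-\lambda|l-y|+c(x,a,l)+\sum_{a'\in\mathcal{A}}Q^{\delta,\mathscr{P}}_{\pi}(l,a')\pi(a'|l)\Big)\le h(y)\quad\text{for all }y\in\mathcal{X}, \] where $c(x,a,l)=1$ if $l\in U$ and $c(x,a,l)=0$ otherwise.
   Context: Consider a Markov decision process with a finite state set $\mathcal{X}$, viewed as a subset of $\mathbb{R}$ (so $|y-z|$ is the distance between states), and a finite action set $\mathcal{A}$. The state set is partitioned into a goal set $E$, a forbidden (unsafe) set $U$, and $H:=\mathcal{X}\setminus(E\cup U)$; $E$ and $U$ are terminal (the process stops there). For each $(x,a)\in H\times\mathcal{A}$ a nominal transition probability $\mathcal{P}_{x,a}=\{P_{x,a}(y)\}_{y\in\mathcal{X}}$ on $\mathcal{X}$ is given, and $\mathscr{P}=\{\mathcal{P}_{x,a}\}_{(x,a)\in H\times\mathcal{A}}$; transition probabilities are time-invariant. The sample space is $\Omega=(\mathcal{X}\times\mathcal{A})^{\infty}$ with coordinate processes $X_t,A_t$. A stationary policy is $\pi:\mathcal{X}\to\mathscr{M}(\mathcal{A})$, written $\pi(a|x)$. For any collection $\tilde{\mathscr{P}}=\{\tilde{\mathcal{P}}_{x,a}\}_{(x,a)\in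 H\times\mathcal{A}}$ of transition probabilities, $\mathbb{E}^{\tilde{\mathscr{P}}}_{\pi}$ denotes expectation for the process with $X_{t+1}\sim\tilde{\mathcal{P}}_{X_t,A_t}$ and $A_t\sim\pi(\cdot|X_t)$ (except when $A_0$ is conditioned on). For $S\subseteq\mathcal{X}$, $\tau_S$ is the first hitting time of $S$, and $\tau=\tau_{E\cup U}$. The 1-Wasserstein distance between probability measures $\mu,\nu$ on $\mathcal{X}$ is $W(\mu,\nu)=\min\{\sum_{(y,z)}\Gamma(y,z)|y-z| : \Gamma\in\mathscr{M}(\mathcal{X}\times\mathcal{X}),\ \sum_z\Gamma(y,z)=\mu(y),\ \sum_y\Gamma(y,z)=\nu(z)\}$. For $\delta\ge0$, $\mathcal{D}^{\delta}_{x,a}=\{\tilde{\mathcal{P}}_{x,a}\in\mathscr{M}(\mathcal{X}): W(\tilde{\mathcal{P}}_{x,a},\mathcal{P}_{x,a})\le\delta\}$ and $\mathscr{D}^{\delta}=\prod_{(x,a)\in H\times\mathcal{A}}\mathcal{D}^{\delta}_{x,a}$. The robust Q-function is $Q^{\delta,\mathscr{P}}_{\pi}(x,a)=\sup_{\tilde{\mathscr{P}}\in\mathscr{D}^{\delta}}\mathbb{E}^{\tilde{\mathscr{P}}}_{\pi}\big[\sum_{t=0}^{\tau-1}c_{t+1}\mid X_0=x,A_0=a\big]$, where $c_{t+1}=1$ if $X_{t+1}\in U$ and $0$ otherwise; by the same formula (empty sum, since $\tau=0$), $Q^{\delta,\mathscr{P}}_{\pi}(l,a')=0$ for terminal states $l\in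 E\cup U$. *)

From HB Require Import structures.
From mathcomp Require Import all_boot all_order all_algebra.
From mathcomp Require Import all_classical all_reals ereal.
Set Implicit Arguments. Unset Strict Implicit. Unset Printing Implicit Defensive.
Import Order.TTheory GRing.Theory Num.Theory.
Local Open Scope ring_scope.
Local Open Scope classical_set_scope.

Section RobustMDP.
Variables (R : realType) (X A : finType).

Definition isDist (T : finType) (p : T -> R) : Prop :=
  (forall y, 0 <= p y) /\ \sum_(y : T) p y = 1.

Definition isCoupling (mu nu : X -> R) (G : X -> X -> R) : Prop :=
  (forall y z, 0 <= G y z) /\
  (forall y, \sum_(z : X) G y z = mu y) /\
  (forall z, \sum_(y : X) G y z = nu z).

(* 1-Wasserstein distance, states located on the real line via loc *)
Definition Wass (loc : X -> R) (mu nu : X -> R) : R :=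
  inf [set r : R | exists G, isCoupling mu nu G /\
                    r = \sum_(y : X) \sum_(z : X) G y z * `|loc y - loc z| ].

(* non-terminal states H = X \ (E u U) *)
Definition Hset (E U : {set X}) : {set X} := ~: (E :|: U).

Definition cost (U : {set X}) (l : X) : R := if l \in U then 1 else 0.

Definition admissible (loc : X -> R) (E U : {set X}) (P : X -> A -> X -> R)
  (delta : R) (Pt : X -> A -> X -> R) : Prop :=
  forall x a, x \in Hset E U -> isDist (Pt x a) /\ Wass loc (Pt x a) (P x a) <= delta.

(* Vn Pt n x a = E^{Pt}_pi [ sum_{t=0}^{min(tau,n)-1} c_{t+1} | X_0 = x, A_0 = a ]
   for x in H (process stopped on E u U). *)
Fixpoint Vn (E U : {set X}) (pi : X -> A -> R) (Pt : X -> A -> X -> R)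
  (n : nat) (x : X) (a : A) : R :=
  match n with
  | 0 => 0
  | n'.+1 => \sum_(y : X) Pt x a y *
       (cost U y + (if y \in Hset E U
                    then \sum_(a' : A) pi y a' * Vn E U pi Pt n' y a' else 0))
  end.

(* Robust Q-function: sup over admissible Pt of the expected accumulated cost
   E[sum_{t=0}^{tau-1} c_{t+1}] = sup_n (monotone limit of) Vn; 0 on terminal states. *)
Definition Qrob (loc : X -> R) (E U : {set X}) (P : X -> A -> X -> R)
  (pi : X -> A -> R) (delta : R) (x : X) (a : A) : \bar R :=
  if x \in Hset E U then
    ereal_sup [set r : \bar R | exists Pt n, admissible loc E U P delta Pt /\
                                 r = (Vn E U pi Pt n x a)%:E]
  else 0%E.

Definition dualValue (loc : X -> R) (E U : {set X}) (P : X -> A -> X -> R)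
  (pi : X -> A -> R) (delta : R) (x : X) (a : A) : \bar R :=
  ereal_inf [set r : \bar R | exists (lam : R) (h : X -> R),
     0 <= lam /\
     (forall y l : X,
        ((- lam * `|loc l - loc y| + cost U l)%:E
          + \sum_(a' : A) (Qrob loc E U P pi delta l a' * (pi l a')%:E))%E
        <= (h y)%:E)%E /\
     r = (lam * delta + \sum_(y : X) h y * P x a y)%:E].

End RobustMDP.

(* Rectangularity of the Wasserstein ambiguity set makes the robust
   Q-function [q] a fixed point of the robust Bellman operator
     T q (x, a) = sup { E_p [c + sum_a' pi(a'|.) q(., a')] | W(p, P_{x,a}) <= delta }.
   [q <= T q] because every finite-horizon value is one Bellman step applied
   to a shorter one.  For [T q <= q]: the robust value iterates [T^k 0]
   dominate all finite-horizon values, hence approximate [q] uniformly on the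
   finite set H x A, and each of them is at most [q], since with a discount
   [b < 1] an almost optimal stationary adversary loses only a geometric
   series, while removing the discount costs at most [k (1 - b)] over [k]
   steps.
   What remains is Wasserstein duality on a finite space: weak duality
   integrates the dual constraint against a near-optimal coupling, and the
   dual is attained because the primal is a linear program with a single
   constraint over mixtures of transport maps, whose optimum mixes just two
   maps; [lambda] is the multiplier of that constraint. *)

From HB Require Import structures.
From mathcomp Require Import all_boot all_order all_algebra.
From mathcomp Require Import all_classical all_reals ereal.
From mathcomp Require Import topology normedtype sequences.
From mathcomp Require Import ring lra.
Set Implicit Arguments. Unset Strict Implicit. Unset Printing Implicit Defensive.
Import Order.TTheory GRing.Theory Num.Theory numFieldNormedType.Exports.
Local Open Scope ring_scope.

Lemma expr_le_small (R : realType) (b e : R) :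
  0 <= b -> b < 1 -> 0 < e -> exists m : nat, b ^+ m <= e.
Proof.
move=> b0 b1 e0; have bN : `|b| < 1 by rewrite ger0_norm.
have [N _ hN] := cvgr0_norm_le _ (cvg_expr bN) _ e0.
by exists N; have := hN N (leqnn N); rewrite /= ger0_norm // exprn_ge0.
Qed.

Lemma sub1X_le (R : realFieldType) (b : R) (k : nat) :
  0 <= b <= 1 -> 1 - b ^+ k <= k%:R * (1 - b).
Proof.
move=> /andP[b0 b1]; elim: k => [|k IH]; first by rewrite expr0 subrr mul0r.
have bk0 : 0 <= b ^+ k by exact: exprn_ge0.
have bk1 : b ^+ k <= 1 by exact: exprn_ile1.
rewrite exprS -addn1 natrD; nra.
Qed.

Section Expectation.
Variables (R : realType) (T : finType) (p : T -> R).
Hypothesis p_dist : isDist p.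

Lemma expect_le_ub (g : T -> R) (M : R) :
  (forall y, g y <= M) -> \sum_y p y * g y <= M.
Proof.
case: p_dist => p0 p1 gM; rewrite -[leRHS]mul1r -p1 mulr_suml.
by apply: ler_sum => y _; apply: ler_wpM2l.
Qed.

Lemma expect_ge_lb (g : T -> R) (M : R) :
  (forall y, M <= g y) -> M <= \sum_y p y * g y.
Proof.
case: p_dist => p0 p1 gM; rewrite -[leLHS]mul1r -p1 mulr_suml.
by apply: ler_sum => y _; apply: ler_wpM2l.
Qed.

Lemma ler_expect (g g' : T -> R) :
  (forall y, g y <= g' y) -> \sum_y p y * g y <= \sum_y p y * g' y.
Proof. by case: p_dist => p0 _ gg'; apply: ler_sum => y _; apply: ler_wpM2l. Qed.

Lemma expectDr (g : T -> R) (c : R) :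
  \sum_y p y * (g y + c) = \sum_y p y * g y + c.
Proof.
case: p_dist => _ p1; under eq_bigr do rewrite mulrDr.
by rewrite big_split /= -mulr_suml p1 mul1r.
Qed.

End Expectation.

(* The optimal value [v] of maximizing [E F] over the mixtures of points of
   [I] subject to [E C <= delta] is attained by a mixture of two points; the
   multiplier is the largest slope [(F j - v) / (C j - delta)] over the points
   [j] violating the constraint. *)
Section TwoPointLagrange.
Variables (R : realFieldType) (I : finType) (C F : I -> R) (delta : R) (i0 : I).
Hypothesis C_i0 : C i0 <= delta.

Let weight (k : I * I) : R :=
  if delta < C k.2 then (C k.2 - delta) / (C k.2 - C k.1) else 1.
Let mix (k : I * I) : R := weight k * F k.1 + (1 - weight k) * F k.2.
Let kopt := [arg max_(k > (i0, i0) | C k.1 <= delta) mix k]%O.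
Let v := mix kopt.

Let kopt_feasible : C kopt.1 <= delta.
Proof. by rewrite /kopt; case: arg_maxP. Qed.

Let mix_le_v k : C k.1 <= delta -> mix k <= v.
Proof. by rewrite /v /kopt; case: arg_maxP => //= k' _; apply. Qed.

Let weight_01 k : C k.1 <= delta -> 0 <= weight k <= 1.
Proof.
rewrite /weight; case: ifP => hk hk1; last by rewrite ler01 lexx.
have hpos : 0 < C k.2 - C k.1 by lra.
by rewrite divr_ge0 ?ler_pdivrMr //=; lra.
Qed.

Let weight_cost k : C k.1 <= delta ->
  weight k * C k.1 + (1 - weight k) * C k.2 <= delta.
Proof.
rewrite /weight; case: ifP => hk hk1; last by lra.
by rewrite le_eqVlt; apply/predU1P; left; field; lra.
Qed.

Let F_le_v i : C i <= delta -> F i <= v.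
Proof.
move=> Ci; have := @mix_le_v (i, i) Ci.
by rewrite /mix /weight /= ltNge Ci /= subrr mul0r addr0 mul1r.
Qed.

Let cross_le_v i j : C i <= delta -> delta < C j ->
  F i * (C j - delta) + F j * (delta - C i) <= v * (C j - C i).
Proof.
move=> Ci Cj; have hpos : 0 < C j - C i by lra.
have -> : F i * (C j - delta) + F j * (delta - C i) = mix (i, j) * (C j - C i).
  by rewrite /mix /weight /= Cj; field; lra.
by rewrite ler_pM2r //; exact: mix_le_v.
Qed.

Let slope j : R := if delta < C j then (F j - v) / (C j - delta) else 0.
Let jopt := [arg max_(j > i0) slope j]%O.
Let lam : R := if 0 < slope jopt then slope jopt else 0.

Let lam_ge0 : 0 <= lam.
Proof. by rewrite /lam; case: ifP => // /ltW. Qed.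

Let slope_le_lam j : slope j <= lam.
Proof.
rewrite /lam /jopt; case: arg_maxP => //= j' _ jmax.
by apply: le_trans (jmax j isT) _; case: ifP => // /negbT; rewrite -leNgt.
Qed.

Let lagrange_le k : F k <= v + lam * (C k - delta).
Proof.
have [Ck|Ck] := ltP delta (C k).
  have := slope_le_lam k; rewrite /slope Ck ler_pdivrMr; lra.
rewrite /lam; case: ifP => [hs|_]; last by rewrite mul0r addr0; exact: F_le_v.
have hj : delta < C jopt by move: hs; rewrite /slope; case: ifP => //; lra.
have e : slope jopt * (C jopt - delta) = F jopt - v.
  by rewrite /slope hj; field; lra.
have := cross_le_v Ck hj; nra.
Qed.

Lemma two_point_lagrange : exists i j (th lam : R),
  [/\ 0 <= th <= 1, th * C i + (1 - th) * C j <= delta, 0 <= lam &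
      forall k, F k <= th * F i + (1 - th) * F j + lam * (C k - delta)].
Proof.
exists kopt.1, kopt.2, (weight kopt), lam.
by split; [exact: weight_01 | exact: weight_cost | exact: lam_ge0 | exact: lagrange_le].
Qed.

End TwoPointLagrange.

Section WassersteinBall.
Variables (R : realType) (X : finType) (loc : X -> R).
Local Open Scope classical_set_scope.

Definition dloc (l y : X) : R := `|loc l - loc y|.

Definition transport_cost (G : X -> X -> R) : R :=
  \sum_y \sum_z G y z * dloc y z.

Lemma transport_cost_ge0 G : (forall y z, 0 <= G y z) -> 0 <= transport_cost G.
Proof.
move=> G0; do 2![apply: sumr_ge0 => ? _].
by apply: mulr_ge0 => //; exact: normr_ge0.
Qed.

Lemma Wass_le_cost mu nu G :
  isCoupling mu nu G -> Wass loc mu nu <= transport_cost G.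
Proof.
move=> cG; apply: ge_inf; last by exists G.
by exists 0 => _ [G' [[G'0 _] ->]]; exact: transport_cost_ge0.
Qed.

Lemma Wass_near mu nu e : isDist mu -> isDist nu -> 0 < e ->
  exists G, isCoupling mu nu G /\ transport_cost G < Wass loc mu nu + e.
Proof.
move=> [mu0 mu1] [nu0 nu1] e0.
have hS : has_inf [set r : R | exists G, isCoupling mu nu G /\
                    r = \sum_y \sum_z G y z * `|loc y - loc z|].
  split; last by exists 0 => _ [G [[G0 _] ->]]; exact: transport_cost_ge0.
  exists (transport_cost (fun y z => mu y * nu z)), (fun y z => mu y * nu z).
  split=> //; split; first by move=> y z; apply: mulr_ge0.
  by split=> [y|z]; rewrite -?mulr_sumr -?mulr_suml ?nu1 ?mu1 ?mulr1 ?mul1r.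
by have [_ [G [cG ->]] ?] := inf_adherent e0 hS; exists G.
Qed.

Definition pushforward (nu : X -> R) (K : X -> X -> R) (l : X) : R :=
  \sum_y nu y * K y l.

Section Kernel.
Variables (nu : X -> R) (K : X -> X -> R).
Hypotheses (nu_dist : isDist nu) (K0 : forall y l, 0 <= K y l)
  (K1 : forall y, \sum_l K y l = 1).

Lemma expect_pushforward (g : X -> R) :
  \sum_l pushforward nu K l * g l = \sum_y nu y * \sum_l K y l * g l.
Proof.
under eq_bigr do rewrite mulr_suml; rewrite exchange_big /=.
by apply: eq_bigr => y _; rewrite mulr_sumr; apply: eq_bigr => l _; rewrite mulrA.
Qed.

Lemma pushforward_dist : isDist (pushforward nu K).
Proof.
case: nu_dist => nu0 nu1; split.
  by move=> l; apply: sumr_ge0 => y _; apply: mulr_ge0.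
have := expect_pushforward (fun _ => 1); under eq_bigr do rewrite mulr1.
move=> ->; rewrite -[RHS]nu1; apply: eq_bigr => y _.
by under eq_bigr do rewrite mulr1; rewrite K1 mulr1.
Qed.

Lemma Wass_pushforward_le :
  Wass loc (pushforward nu K) nu <= \sum_y nu y * \sum_l K y l * dloc l y.
Proof.
case: nu_dist => nu0 _.
have -> : \sum_y nu y * \sum_l K y l * dloc l y =
          transport_cost (fun l y => nu y * K y l).
  rewrite /transport_cost exchange_big /=; apply: eq_bigr => y _.
  by rewrite mulr_sumr; apply: eq_bigr => l _; rewrite mulrA.
apply: Wass_le_cost; split; first by move=> l y; apply: mulr_ge0.
by split=> // y; rewrite -mulr_sumr K1 mulr1.
Qed.

End Kernel.

Definition mix_kernel (th : R) (i j : X -> X) (y l : X) : R :=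
  th * (l == i y)%:R + (1 - th) * (l == j y)%:R.

Lemma sum_mul_indicator (g : X -> R) (c : X) : \sum_l g l * (l == c)%:R = g c.
Proof.
rewrite (bigD1 c) //= eqxx mulr1 big1 ?addr0 // => l /negbTE ->.
exact: mulr0.
Qed.

Lemma sum_mix_kernel th i j y (g : X -> R) :
  \sum_l mix_kernel th i j y l * g l = th * g (i y) + (1 - th) * g (j y).
Proof.
rewrite -(sum_mul_indicator g (i y)) -(sum_mul_indicator g (j y)).
rewrite !mulr_sumr -big_split /=.
by apply: eq_bigr => l _; rewrite /mix_kernel; ring.
Qed.

Lemma expect_mix (nu a b : X -> R) (th : R) :
  \sum_y nu y * (th * a y + (1 - th) * b y) =
  th * \sum_y nu y * a y + (1 - th) * \sum_y nu y * b y.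
Proof. by rewrite !mulr_sumr -big_split /=; apply: eq_bigr => y _; ring. Qed.

Definition wball (nu : X -> R) (delta : R) (p : X -> R) : Prop :=
  isDist p /\ Wass loc p nu <= delta.

Definition wsup (nu : X -> R) (delta : R) (g : X -> R) : R :=
  sup [set \sum_l p l * g l | p in wball nu delta].

Section Ball.
Variables (nu : X -> R) (delta : R).
Hypotheses (nu_dist : isDist nu) (delta_ge0 : 0 <= delta).

Lemma wball_mix th i j : 0 <= th <= 1 ->
  \sum_y nu y * (th * dloc (i y) y + (1 - th) * dloc (j y) y) <= delta ->
  wball nu delta (pushforward nu (mix_kernel th i j)).
Proof.
move=> /andP[th0 th1] hcost.
have K0 y l : 0 <= mix_kernel th i j y l.
  by rewrite /mix_kernel addr_ge0 // mulr_ge0 ?ler0n //; lra.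
have K1 y : \sum_l mix_kernel th i j y l = 1.
  under eq_bigr do rewrite -[mix_kernel _ _ _ _ _]mulr1.
  by rewrite sum_mix_kernel; ring.
split; first exact: pushforward_dist.
apply: le_trans (Wass_pushforward_le nu_dist K0 K1) _.
by under eq_bigr do rewrite sum_mix_kernel.
Qed.

Lemma wball_center : wball nu delta nu.
Proof.
have nuE : pushforward nu (mix_kernel 1 id id) = nu.
  apply/funext => l; rewrite /pushforward /mix_kernel.
  under eq_bigr do rewrite subrr mul0r addr0 mul1r eq_sym.
  by rewrite sum_mul_indicator.
rewrite -[X in wball _ _ X]nuE; apply: wball_mix; first by rewrite ler01 lexx.
rewrite big1 // => y _; rewrite /dloc /= subrr normr0; ring.
Qed.

Lemma wsup_has (g : X -> R) :
  has_sup [set \sum_l p l * g l | p in wball nu delta].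
Proof.
split; first by exists (\sum_l nu l * g l), nu; [exact: wball_center|].
exists (\sum_l `|g l|) => _ [p [pD _] <-]; apply: expect_le_ub => // y.
apply: le_trans (ler_norm _) _.
by rewrite (bigD1 y) //= lerDl sumr_ge0 // => *; exact: normr_ge0.
Qed.

Lemma wsup_ub (g : X -> R) p :
  wball nu delta p -> \sum_l p l * g l <= wsup nu delta g.
Proof. by move=> pB; apply: sup_upper_bound (wsup_has g) _ _; exists p. Qed.

Lemma wsup_near (g : X -> R) e : 0 < e ->
  exists p, wball nu delta p /\ wsup nu delta g - e < \sum_l p l * g l.
Proof.
by move=> e0; have [_ [p pB <-] ?] := sup_adherent e0 (wsup_has g); exists p.
Qed.

Lemma wsup_le (g : X -> R) c :
  (forall p, wball nu delta p -> \sum_l p l * g l <= c) -> wsup nu delta g <= c.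
Proof.
move=> hc; apply: ge_sup.
  by exists (\sum_l nu l * g l), nu; [exact: wball_center|].
by move=> _ [p pB <-]; exact: hc.
Qed.

Lemma le_wsup (g g' : X -> R) :
  (forall l, g l <= g' l) -> wsup nu delta g <= wsup nu delta g'.
Proof.
move=> gg'; apply: wsup_le => p pB; apply: le_trans (wsup_ub g' pB).
by apply: ler_expect => //; case: pB.
Qed.

Lemma wsup_bounded (g : X -> R) (m M : R) :
  (forall l, m <= g l <= M) -> m <= wsup nu delta g <= M.
Proof.
move=> gmM; apply/andP; split.
  apply: le_trans (wsup_ub g wball_center).
  by apply: expect_ge_lb => // l; case/andP: (gmM l).
by apply: wsup_le => p [pD _]; apply: expect_le_ub => // l; case/andP: (gmM l).
Qed.

Lemma wsup_scale (c : R) (g g' : X -> R) : 0 <= c ->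
  (forall l, c * g l <= g' l) -> c * wsup nu delta g <= wsup nu delta g'.
Proof.
rewrite le_eqVlt => /orP[/eqP <- | c0] hg.
  rewrite mul0r; apply: le_trans (wsup_ub g' wball_center).
  by apply: expect_ge_lb => // l; have := hg l; rewrite mul0r.
rewrite mulrC -ler_pdivlMr //; apply: wsup_le => p pB.
rewrite ler_pdivlMr // mulrC mulr_sumr; under eq_bigr do rewrite mulrCA.
by apply: le_trans (wsup_ub g' pB); apply: ler_expect; [case: pB | exact: hg].
Qed.

Lemma coupling_expect_le p G (g h : X -> R) lam :
  isCoupling p nu G -> 0 <= lam -> (forall y l, g l - lam * dloc l y <= h y) ->
  \sum_l p l * g l <= \sum_y h y * nu y + lam * transport_cost G.
Proof.
move=> [G0 [Grow Gcol]] lam0 hgh.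
have -> : \sum_l p l * g l = \sum_l \sum_y G l y * g l.
  by apply: eq_bigr => l _; rewrite -Grow mulr_suml.
have -> : \sum_y h y * nu y = \sum_l \sum_y G l y * h y.
  rewrite exchange_big /=; apply: eq_bigr => y _.
  by rewrite -Gcol mulr_sumr; apply: eq_bigr => l _; rewrite mulrC.
rewrite /transport_cost mulr_sumr -big_split /=; apply: ler_sum => l _.
rewrite mulr_sumr -big_split /=; apply: ler_sum => y _.
by rewrite mulrCA -mulrDr; apply: ler_wpM2l => //; have := hgh y l; lra.
Qed.

Lemma wsup_le_dual (g h : X -> R) lam : 0 <= lam ->
  (forall y l, g l - lam * dloc l y <= h y) ->
  wsup nu delta g <= lam * delta + \sum_y h y * nu y.
Proof.
move=> lam0 hgh; apply: wsup_le => p [pD pW]; apply/ler_addgt0Pr => e e0.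
have e1 : 0 < e / (lam + 1) by apply: divr_gt0 => //; lra.
have [G [cG hG]] := Wass_near pD nu_dist e1.
apply: le_trans (coupling_expect_le cG lam0 hgh) _.
have lam_e : lam * (e / (lam + 1)) <= e by rewrite mulrA ler_pdivrMr; nra.
have : lam * transport_cost G <= lam * (delta + e / (lam + 1)).
  by apply: ler_wpM2l => //; lra.
lra.
Qed.

Lemma wsup_dual_attained (g : X -> R) : exists lam (h : X -> R),
  [/\ 0 <= lam, forall y l, g l - lam * dloc l y <= h y &
      lam * delta + \sum_y h y * nu y <= wsup nu delta g].
Proof.
pose C (s : {ffun X -> X}) := \sum_y nu y * dloc (s y) y.
pose F (s : {ffun X -> X}) := \sum_y nu y * g (s y).
have C_id : C [ffun y => y] <= delta.
  by rewrite /C big1 // => y _; rewrite ffunE /dloc subrr normr0 mulr0.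
have [i [j [th [lam [th01 hC lam0 hF]]]]] := two_point_lagrange F C_id.
pose tau := [ffun y => [arg max_(l > y) (g l - lam * dloc l y)]%O].
have tau_max y l : g l - lam * dloc l y <= g (tau y) - lam * dloc (tau y) y.
  by rewrite /tau ffunE; case: arg_maxP => //= m _; apply.
exists lam, (fun y => g (tau y) - lam * dloc (tau y) y); split => //.
have pB : wball nu delta (pushforward nu (mix_kernel th i j)).
  by apply: wball_mix => //; rewrite expect_mix.
apply: le_trans (wsup_ub g pB).
have -> : \sum_l pushforward nu (mix_kernel th i j) l * g l =
          th * F i + (1 - th) * F j.
  by rewrite expect_pushforward; under eq_bigr do rewrite sum_mix_kernel;
    rewrite expect_mix.
have -> : \sum_y (g (tau y) - lam * dloc (tau y) y) * nu y = F tau - lam * C tau.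
  by rewrite /F /C mulr_sumr -sumrB; apply: eq_bigr => y _; ring.
by have := hF tau; rewrite /F /C; lra.
Qed.

Lemma wsup_dualE (g : X -> R) :
  (wsup nu delta g)%:E = ereal_inf [set r | exists lam (h : X -> R),
    0 <= lam /\ (forall y l, g l - lam * dloc l y <= h y) /\
    r = (lam * delta + \sum_y h y * nu y)%:E].
Proof.
apply: le_anti; apply/andP; split.
  apply: le_ereal_inf_tmp => _ [lam [h [lam0 [hgh ->]]]].
  by rewrite lee_fin; exact: wsup_le_dual.
have [lam [h [lam0 hgh hle]]] := wsup_dual_attained g.
by apply: ge_ereal_inf; exists (lam * delta + \sum_y h y * nu y)%:E;
  [exists lam, h | rewrite lee_fin].
Qed.

End Ball.
End WassersteinBall.

Section RobustQ.
Variables (R : realType) (X A : finType) (loc : X -> R) (E U : {set X})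
  (P : X -> A -> X -> R) (pi : X -> A -> R) (delta : R).
Hypotheses (delta_ge0 : 0 <= delta)
  (P_dist : forall x a, x \in Hset E U -> isDist (P x a))
  (pi_dist : forall x, isDist (pi x)).

Local Notation H := (Hset E U).

Local Open Scope classical_set_scope.

Definition unit_valued (h : X -> A -> R) : Prop :=
  forall y a', y \in H -> 0 <= h y a' <= 1.

Definition backup (b : R) (h : X -> A -> R) (y : X) : R :=
  cost R U y + (if y \in H then b * \sum_a' pi y a' * h y a' else 0).

Definition rbellman (b : R) (h : X -> A -> R) (x : X) (a : A) : R :=
  wsup loc (P x a) delta (backup b h).

Lemma cost_H y : y \in H -> cost R U y = 0.
Proof.
rewrite /Hset finset.in_setC finset.in_setU negb_or => /andP[_ /negbTE yU].
by rewrite /cost yU.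
Qed.

Lemma cost_01 y : 0 <= cost R U y <= 1.
Proof. by rewrite /cost; case: ifP; rewrite ?lexx ?ler01. Qed.

Lemma backup_01 b h y : 0 <= b <= 1 -> unit_valued h -> 0 <= backup b h y <= 1.
Proof.
move=> /andP[b0 b1] h01; rewrite /backup.
case: ifP => yH; last by rewrite addr0 cost_01.
have s0 : 0 <= \sum_a' pi y a' * h y a'.
  by apply: expect_ge_lb => // a'; case/andP: (h01 y a' yH).
have s1 : \sum_a' pi y a' * h y a' <= 1.
  by apply: expect_le_ub => // a'; case/andP: (h01 y a' yH).
by rewrite cost_H // add0r mulr_ge0 //= -[1]mulr1 ler_pM.
Qed.

Lemma backup_le b h h' e y : 0 <= b -> 0 <= e ->
  (forall y a', y \in H -> h y a' <= h' y a' + e) ->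
  backup b h y <= backup b h' y + b * e.
Proof.
move=> b0 e0 hh'; rewrite /backup -addrA lerD2l; case: ifP => yH.
  rewrite -mulrDr ler_wpM2l // -expectDr //.
  by apply: ler_expect => // a'; exact: hh'.
by rewrite add0r mulr_ge0.
Qed.

Lemma le_backup b h h' y : 0 <= b ->
  (forall y a', y \in H -> h y a' <= h' y a') -> backup b h y <= backup b h' y.
Proof.
move=> b0 hh'; have := @backup_le b h h' 0 y b0 (lexx 0).
by rewrite mulr0 addr0; apply=> y' a' y'H; rewrite addr0 hh'.
Qed.

Lemma backup_le_discount b b' h y : 0 <= b <= b' ->
  (forall y a', y \in H -> 0 <= h y a') -> backup b h y <= backup b' h y.
Proof.
move=> /andP[b0 bb'] h0; rewrite /backup lerD2l; case: ifP => yH //.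
by apply: ler_wpM2r => //; apply: expect_ge_lb => // a'; exact: h0.
Qed.

Lemma backup_scale b c h y : 0 <= b <= 1 -> 0 <= c <= 1 ->
  (forall y a', y \in H -> 0 <= h y a') ->
  b * c * backup 1 h y <= backup b (fun y a' => c * h y a') y.
Proof.
move=> /andP[b0 b1] /andP[c0 c1] h0.
have bc0 : 0 <= b * c by exact: mulr_ge0.
have bc1 : b * c <= 1 by rewrite -[1]mulr1 ler_pM.
rewrite /backup mulrDr; have /andP[k0 k1] := cost_01 y.
case: ifP => yH; last by rewrite !addr0; nra.
have s0 : 0 <= \sum_a' pi y a' * h y a'.
  by apply: expect_ge_lb => // a'; exact: h0.
have -> : \sum_a' pi y a' * (c * h y a') = c * \sum_a' pi y a' * h y a'.
  by rewrite mulr_sumr; apply: eq_bigr => a' _; rewrite mulrCA.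
nra.
Qed.

Lemma rbellman_01 b h x a : x \in H -> 0 <= b <= 1 -> unit_valued h ->
  0 <= rbellman b h x a <= 1.
Proof.
by move=> xH hb h01; apply: wsup_bounded => // [|l]; [exact: P_dist | exact: backup_01].
Qed.

Lemma le_rbellman b h h' x a : x \in H -> 0 <= b ->
  (forall y a', y \in H -> h y a' <= h' y a') ->
  rbellman b h x a <= rbellman b h' x a.
Proof.
by move=> xH b0 hh'; apply: le_wsup => // [|l]; [exact: P_dist | exact: le_backup].
Qed.

Fixpoint disc_value (b : R) (Pt : X -> A -> X -> R) (n : nat) : X -> A -> R :=
  if n is n'.+1 then fun x a => \sum_y Pt x a y * backup b (disc_value b Pt n') y
  else fun _ _ => 0.

Lemma Vn_disc_value Pt n x a : Vn E U pi Pt n x a = disc_value 1 Pt n x a.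
Proof.
elim: n x a => [|n IH] x a //=; apply: eq_bigr => y _.
by rewrite /backup mul1r; under [in RHS]eq_bigr do rewrite -IH.
Qed.

Section Adversary.
Variable Pt : X -> A -> X -> R.
Hypothesis Pt_dist : forall x a, x \in H -> isDist (Pt x a).

Lemma disc_value_01 b n : 0 <= b <= 1 -> unit_valued (disc_value b Pt n).
Proof.
move=> hb; elim: n => [|n IH] y a' yH /=; first by rewrite lexx ler01.
have Pd := Pt_dist a' yH.
by apply/andP; split; [apply: (expect_ge_lb Pd) | apply: (expect_le_ub Pd)] => l;
  case/andP: (backup_01 l hb IH).
Qed.

Lemma disc_value_le_discount b b' n : 0 <= b <= b' -> b' <= 1 ->
  forall x a, x \in H -> disc_value b Pt n x a <= disc_value b' Pt n x a.
Proof.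
move=> hbb' b'1; have /andP[b0 bb'] := hbb'.
have hb' : 0 <= b' <= 1 by rewrite b'1 (le_trans b0 bb').
elim: n => [|n IH] x a xH //=.
apply: ler_expect => [|y]; first exact: Pt_dist.
apply: le_trans (le_backup y b0 IH) (backup_le_discount y hbb' _) => y' a' y'H.
by case/andP: (disc_value_01 n hb' a' y'H).
Qed.

End Adversary.

(* Junk outside [H], where it is never used. *)
Definition qval (x : X) (a : A) : R :=
  sup [set r | exists Pt n, admissible loc E U P delta Pt /\
                            r = Vn E U pi Pt n x a].

Lemma admissible_P : admissible loc E U P delta P.
Proof. by move=> x a xH; apply: wball_center; [exact: P_dist | exact: delta_ge0]. Qed.

Lemma admissible_dist Pt : admissible loc E U P delta Pt ->
  forall x a, x \in H -> isDist (Pt x a).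
Proof. by move=> Pt_adm x a xH; case: (Pt_adm x a xH). Qed.

Lemma unit_discount : 0 <= (1 : R) <= 1.
Proof. by rewrite ler01 lexx. Qed.

Lemma qval_has x a : x \in H ->
  has_sup [set r | exists Pt n, admissible loc E U P delta Pt /\
                                r = Vn E U pi Pt n x a].
Proof.
move=> xH; split; first by exists 0, P, 0%N; split=> //; exact: admissible_P.
exists 1 => _ [Pt [n [Pt_adm ->]]]; rewrite Vn_disc_value.
by case/andP: (disc_value_01 (admissible_dist Pt_adm) n unit_discount a xH).
Qed.

Lemma qval_ub Pt n x a : x \in H -> admissible loc E U P delta Pt ->
  disc_value 1 Pt n x a <= qval x a.
Proof.
move=> xH Pt_adm; rewrite -Vn_disc_value.
by apply: sup_upper_bound (qval_has a xH) _ _; exists Pt, n.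
Qed.

Lemma qval_near x a e : x \in H -> 0 < e -> exists Pt n,
  admissible loc E U P delta Pt /\ qval x a - e < disc_value 1 Pt n x a.
Proof.
move=> xH e0; have [_ [Pt [n [Pt_adm ->]]] ?] := sup_adherent e0 (qval_has a xH).
by exists Pt, n; rewrite -Vn_disc_value.
Qed.

Lemma qval_01 : unit_valued qval.
Proof.
move=> x a xH; apply/andP; split; first exact: (qval_ub 0 a xH admissible_P).
apply: ge_sup; first by exists 0, P, 0%N; split=> //; exact: admissible_P.
move=> _ [Pt [n [Pt_adm ->]]]; rewrite Vn_disc_value.
by case/andP: (disc_value_01 (admissible_dist Pt_adm) n unit_discount a xH).
Qed.

Lemma Qrob_qval x a : x \in H -> Qrob loc E U P pi delta x a = (qval x a)%:E.
Proof.
move=> xH; rewrite /Qrob xH.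
have -> : [set r : \bar R | exists Pt n, admissible loc E U P delta Pt /\
            r = (Vn E U pi Pt n x a)%:E] =
          EFin @` [set r | exists Pt n, admissible loc E U P delta Pt /\
            r = Vn E U pi Pt n x a].
  apply/seteqP; split=> r.
    by move=> [Pt [n [Pt_adm ->]]]; exists (Vn E U pi Pt n x a) => //; exists Pt, n.
  by move=> [_ [Pt [n [Pt_adm ->]]] <-]; exists Pt, n.
by case: (qval_has a xH) => ne ub; rewrite ereal_sup_EFin.
Qed.

Fixpoint value_iter (b : R) (k : nat) : X -> A -> R :=
  if k is k'.+1 then rbellman b (value_iter b k') else fun _ _ => 0.

Lemma value_iter_01 b k : 0 <= b <= 1 -> unit_valued (value_iter b k).
Proof.
move=> hb; elim: k => [|k IH] y a' yH /=; first by rewrite lexx ler01.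
exact: rbellman_01.
Qed.

Lemma value_iter_leS b k : 0 <= b <= 1 ->
  forall y a', y \in H -> value_iter b k y a' <= value_iter b k.+1 y a'.
Proof.
move=> hb; elim: k => [|k IH] y a' yH.
  by case/andP: (value_iter_01 1 hb a' yH).
by apply: le_rbellman => //; case/andP: hb.
Qed.

Lemma le_value_iter b m n : 0 <= b <= 1 -> (m <= n)%N ->
  forall y a', y \in H -> value_iter b m y a' <= value_iter b n y a'.
Proof.
move=> hb /subnK <-; elim: (n - m)%N => [|k IH] y a' yH; first by rewrite add0n.
by apply: le_trans (IH y a' yH) _; rewrite addSn; exact: value_iter_leS.
Qed.

Lemma disc_value_le_iter Pt n : admissible loc E U P delta Pt ->
  forall x a, x \in H -> disc_value 1 Pt n x a <= value_iter 1 n x a.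
Proof.
move=> Pt_adm; elim: n => [|n IH] x a xH //=.
apply: le_trans (wsup_ub (P_dist a xH) delta_ge0 _ (Pt_adm x a xH)).
by apply: ler_expect => [|y]; [exact: admissible_dist | exact: le_backup].
Qed.

Lemma near_optimal_adversary b h e : 0 < e -> exists Pt,
  admissible loc E U P delta Pt /\ forall x a, x \in H ->
    rbellman b h x a - e < \sum_y Pt x a y * backup b h y.
Proof.
move=> e0.
have near_pick (xa : X * A) : exists p, xa.1 \in H ->
    wball loc (P xa.1 xa.2) delta p /\
    rbellman b h xa.1 xa.2 - e < \sum_y p y * backup b h y.
  case: xa => x a /=; case xH: (x \in H); last by exists (P x a).
  by have [p ?] := wsup_near loc (P_dist a xH) delta_ge0 (backup b h) e0; exists p.
have [pick hpick] := choice near_pick.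
by exists (fun x a => pick (x, a)); split=> x a xH; case: (hpick (x, a) xH).
Qed.

(* Fix in every state an [e (1 - b) / 2]-optimal kernel for [g]: the
   discounted one-step losses then add up to at most [e / 2]. *)
Lemma subsolution_le_qval b g : 0 <= b -> b < 1 -> unit_valued g ->
  (forall x a, x \in H -> g x a <= rbellman b g x a) ->
  forall x a, x \in H -> g x a <= qval x a.
Proof.
move=> b0 b1 g01 g_sub x0 a0 x0H; apply/ler_addgt0Pr => e e0.
have hb : 0 <= b <= 1 by rewrite b0 ltW.
have e2 : 0 < e / 2 by rewrite divr_gt0.
have eta0 : 0 < e / 2 * (1 - b) by rewrite mulr_gt0 // subr_gt0.
have [Pt [Pt_adm Pt_opt]] := near_optimal_adversary b g eta0.
have Pt_dist := admissible_dist Pt_adm.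
have g_le m x a : x \in H -> g x a <= disc_value b Pt m x a + e / 2 + b ^+ m.
  elim: m x a => [|m IH] x a xH /=.
    by case/andP: (g01 x a xH) => _ g1; rewrite expr0 add0r; lra.
  have em0 : 0 <= e / 2 + b ^+ m by rewrite addr_ge0 ?exprn_ge0 // ltW.
  have step : \sum_y Pt x a y * backup b g y <=
      \sum_y Pt x a y * backup b (disc_value b Pt m) y + b * (e / 2 + b ^+ m).
    rewrite -(expectDr (Pt_dist x a xH)); apply: (ler_expect (Pt_dist x a xH)) => y.
    by apply: backup_le => // y' a' y'H; rewrite addrA; exact: IH.
  have := Pt_opt x a xH; have := g_sub x a xH; rewrite exprS; nra.
have [m bm] := expr_le_small b0 b1 e2.
have := g_le m x0 a0 x0H; have := qval_ub m a0 x0H Pt_adm.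
have := disc_value_le_discount Pt_dist m hb (lexx 1) a0 x0H.
lra.
Qed.

Lemma value_iter_scale b k : 0 <= b <= 1 ->
  forall x a, x \in H -> b ^+ k * value_iter 1 k x a <= value_iter b k x a.
Proof.
move=> hb; have /andP[b0 b1] := hb.
elim: k => [|k IH] x a xH /=; first by rewrite mulr0.
have hbk : 0 <= b ^+ k <= 1 by rewrite exprn_ge0 // exprn_ile1.
have u0 y a' : y \in H -> 0 <= value_iter 1 k y a'.
  by move=> yH; case/andP: (value_iter_01 k unit_discount a' yH).
apply: le_trans (le_rbellman a xH b0 IH).
rewrite exprS /rbellman; apply: (wsup_scale loc (P_dist a xH) delta_ge0).
  by rewrite mulr_ge0 // exprn_ge0.
by move=> l; exact: backup_scale.
Qed.

(* Discounting by [b = 1 - y] costs at most [k * y] over [k] steps. *)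
Lemma value_iter_le_qval k x a : x \in H -> value_iter 1 k x a <= qval x a.
Proof.
move=> xH; apply/ler_addgt0Pr => e e0.
have k0 : 0 <= k%:R :> R by exact: ler0n.
pose y := e / (e + k%:R + 1).
have y0 : 0 < y by apply: divr_gt0; lra.
have y1 : y < 1 by rewrite ltr_pdivrMr; lra.
have ky : k%:R * y <= e by rewrite /y mulrA ler_pdivrMr; nra.
have b0 : 0 <= 1 - y by lra.
have b1 : 1 - y < 1 by lra.
have hb : 0 <= 1 - y <= 1 by rewrite b0 ltW.
have vb_le : value_iter (1 - y) k x a <= qval x a.
  apply: subsolution_le_qval b0 b1 (value_iter_01 k hb) _ _ _ xH.
  by move=> x' a' x'H; exact: value_iter_leS.
have := value_iter_scale k hb a xH; have := sub1X_le k hb; rewrite subKr.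
have /andP[u0 u1] := value_iter_01 k unit_discount a xH.
have : (1 - (1 - y) ^+ k) * value_iter 1 k x a <= 1 - (1 - y) ^+ k.
  by apply: ler_piMr => //; rewrite subr_ge0 exprn_ile1 // ltW.
lra.
Qed.

Lemma qval_le_value_iter e : 0 < e -> exists K,
  forall y a', y \in H -> qval y a' <= value_iter 1 K y a' + e.
Proof.
move=> e0.
have near_iter (ya : X * A) : exists n, ya.1 \in H ->
    qval ya.1 ya.2 - e < value_iter 1 n ya.1 ya.2.
  case: ya => y a' /=; case yH : (y \in H); last by exists 0%N.
  have [Pt [n [Pt_adm hn]]] := qval_near a' yH e0.
  by exists n => _; apply: lt_le_trans hn _; exact: disc_value_le_iter.
have [N hN] := choice near_iter.
exists (\max_(ya : X * A) N ya) => y a' yH.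
have := hN (y, a') yH.
have := le_value_iter unit_discount (@leq_bigmax _ N (y, a')) a' yH.
rewrite /=; lra.
Qed.

Lemma rbellman_qval_le x a : x \in H -> rbellman 1 qval x a <= qval x a.
Proof.
move=> xH; apply/ler_addgt0Pr => e e0.
have [K hK] := qval_le_value_iter e0.
apply: le_trans (_ : rbellman 1 (value_iter 1 K) x a + e <= _); last first.
  by rewrite lerD2r; exact: (value_iter_le_qval K.+1 a xH).
rewrite /rbellman; apply: (wsup_le (P_dist a xH) delta_ge0) => p pB.
apply: le_trans (_ : \sum_l p l * (backup 1 (value_iter 1 K) l + e) <= _).
  apply: (ler_expect (proj1 pB)) => l.
  by rewrite -[e]mul1r; apply: backup_le => //; exact: ltW.
by rewrite (expectDr (proj1 pB)) lerD2r; exact: (wsup_ub (P_dist a xH) delta_ge0).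
Qed.

Lemma qval_le_rbellman x a : x \in H -> qval x a <= rbellman 1 qval x a.
Proof.
move=> xH; apply: ge_sup; first by exists 0, P, 0%N; split=> //; exact: admissible_P.
move=> _ [Pt [[|n] [Pt_adm ->]]]; rewrite Vn_disc_value /=.
  by case/andP: (rbellman_01 a xH unit_discount qval_01).
apply: le_trans (wsup_ub (P_dist a xH) delta_ge0 _ (Pt_adm x a xH)).
apply: (ler_expect (admissible_dist Pt_adm a xH)) => y.
by apply: le_backup ler01 _ => y' a' y'H; exact: qval_ub.
Qed.

Lemma qval_fixpoint x a : x \in H -> qval x a = rbellman 1 qval x a.
Proof. by move=> xH; apply: le_anti; rewrite qval_le_rbellman // rbellman_qval_le. Qed.

Lemma sum_Qrob_pi l :
  (\sum_a' Qrob loc E U P pi delta l a' * (pi l a')%:E)%E =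
  (backup 1 qval l - cost R U l)%:E.
Proof.
rewrite /backup addrC addKr; case: ifP => lH.
  rewrite mul1r -sumEFin; apply: eq_bigr => a' _.
  by rewrite Qrob_qval // -EFinM mulrC.
by rewrite big1 // => a' _; rewrite /Qrob lH mul0e.
Qed.

End RobustQ.

Theorem mainTheorem5 (R : realType) (X A : finType) (loc : X -> R)
  (E U : {set X}) (P : X -> A -> X -> R) (pi : X -> A -> R) (delta : R) :
  injective loc ->
  [disjoint E & U] ->
  0 <= delta ->
  (forall x a, x \in Hset E U -> isDist (P x a)) ->
  (forall x, isDist (pi x)) ->
  forall x a, x \in Hset E U ->
    Qrob loc E U P pi delta x a = dualValue loc E U P pi delta x a.
Proof.
move=> _ _ delta_ge0 P_dist pi_dist x a xH.
rewrite (Qrob_qval loc delta_ge0 P_dist pi_dist a xH).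
rewrite (qval_fixpoint loc delta_ge0 P_dist pi_dist a xH) /rbellman.
rewrite (wsup_dualE loc (P_dist x a xH) delta_ge0) /dualValue.
congr ereal_inf; apply/seteqP; split=> _ [lam [h [lam0 [hc ->]]]];
  exists lam, h; split=> //; split=> // y l; move: (hc y l);
  rewrite (sum_Qrob_pi loc delta_ge0 P_dist pi_dist) -EFinD lee_fin /dloc; lra.
Qed.
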